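(* For every $k \geq 2$ and every $m$ with $k \le m \le 2k-2$, the number of Grassmannian permutations of $[m]$ that avoid $\operatorname{id}_k = 12\cdots k$ equals \[ \sum_{j=1}^{2k-m} (-1)^{j-1}\, j \binom{2k-m-j}{j} C_{k-j}, \] where $C_n = \frac{1}{n+1}\binom{2n}{n}$ is the $n$-th Catalan number (and $\binom{a}{b}=0$ when $b>a\ge 0$).
   Context: A permutation of $[m]$ is Grassmannian if it has at most one descent (one-line notation). A permutation $\sigma$ contains a pattern $\pi$ of size $k$ if some subsequence of $\sigma$ of length $k$ is order-isomorphic to $\pi$; otherwise $\sigma$ avoids $\pi$. *)

From mathcomp Require Import all_boot all_order all_algebra all_fingroup.
Set Implicit Arguments. Unset Strict Implicit. Unset Printing Implicit Defensive.
Import GRing.Theory.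

(* A permutation of [m] is s : 'S_m (values 0..m-1 stand for 1..m);
   its one-line notation is s 0, s 1, ..., s (m-1). *)

Definition descents (m : nat) (s : 'S_m) : {set 'I_m} :=
  [set i : 'I_m | [exists j : 'I_m, (val j == (val i).+1) && (s j < s i)]].

Definition grassmannian (m : nat) (s : 'S_m) : bool := #|descents s| <= 1.

Definition contains (m k : nat) (s : 'S_m) (p : 'S_k) : bool :=
  [exists f : {ffun 'I_k -> 'I_m},
     [forall a : 'I_k, forall b : 'I_k,
        ((a < b) ==> (f a < f b)) && ((s (f a) < s (f b)) == (p a < p b))]].

Definition avoids (m k : nat) (s : 'S_m) (p : 'S_k) : bool := ~~ contains s p.

Definition id_pat (k : nat) : 'S_k := 1%g.

Definition catalan (n : nat) : nat := 'C(n.*2, n) %/ n.+1.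

(* A Grassmannian permutation of [m] is determined by the set of values of its
   first increasing run, i.e. by a word w in {0,1}^m with w_v = 1 iff v lies in
   that run; only the identity has several such words, and it contains id_k.
   An increasing subsequence of this permutation uses values v < t with w_v = 1
   from the first run and values v >= t with w_v = 0 from the second, so the
   permutation avoids id_k iff every cut t has weight less than k.  For words with
   z zeros this is a ballot condition (no prefix has more than k-1-z excess ones),
   and the reflection principle counts these words as C(m,z) - C(m,k) for
   m-k < z < k.  The resulting closed form and the alternating Catalan sum obey the
   same Pascal-type recurrence in (2k-m, k), jointly with the unweighted sum,
   whose value is a ballot number. *)

From mathcomp Require Import all_boot all_order all_algebra all_fingroup.
From mathcomp Require Import zify ring.

Set Implicit Arguments.
Unset Strict Implicit.
Unset Printing Implicit Defensive.

Import GRing.Theory.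

Section AlternatingSums.
Local Open Scope ring_scope.

Definition ballot_number a b : int := 'C(a, b)%:Z - 'C(a, b.+1)%:Z.

Lemma ballot_numberS a b :
  ballot_number a.+1 b.+1 = ballot_number a b + ballot_number a b.+1.
Proof. by rewrite /ballot_number !binS !PoszD; ring. Qed.

Lemma catalanE n : (catalan n)%:Z = ballot_number n.*2 n.
Proof.
have bin_ratio : (n.+1 * 'C(n.*2, n.+1) = n * 'C(n.*2, n))%N.
  by rewrite mul_bin_left -addnn addnK.
have le_bin : ('C(n.*2, n.+1) <= 'C(n.*2, n))%N.
  by rewrite -(leq_pmul2l (ltn0Sn n)) bin_ratio leq_mul2r leqnSn orbT.
have catalan_mul : (('C(n.*2, n) - 'C(n.*2, n.+1)) * n.+1 = 'C(n.*2, n))%N.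
  by rewrite mulnBl [X in (_ - X)%N]mulnC bin_ratio mulnSr (mulnC _ n) addKn.
by rewrite /ballot_number subzn // /catalan -{1}catalan_mul mulnK.
Qed.

Lemma bin_antidiagS n j : 'C(n.+1 - j, j.+1) = ('C(n - j, j.+1) + 'C(n - j, j))%N.
Proof.
have [le_jn|lt_nj] := leqP j n; first by rewrite subSn // binS.
have [-> ->] : (n.+1 - j = 0 /\ n - j = 0)%N by lia.
by rewrite !bin0n; case: j lt_nj.
Qed.

Definition alt_term n k j : int :=
  (-1) ^+ j * ('C(n - j, j) * catalan (k - j))%:Z.

Definition alt_wterm n k j : int :=
  (-1) ^+ j.-1 * (j * 'C(n - j, j) * catalan (k - j))%:Z.

Lemma alt_termSS n k j :
  alt_term n.+2 k.+1 j.+1 = alt_term n.+1 k.+1 j.+1 - alt_term n k j.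
Proof. by rewrite /alt_term !subSS bin_antidiagS !PoszM PoszD exprS; ring. Qed.

Lemma alt_wtermSS n k j :
  alt_wterm n.+2 k.+1 j.+1 =
  alt_wterm n.+1 k.+1 j.+1 - alt_wterm n k j + alt_term n k j.
Proof.
rewrite /alt_wterm /alt_term !subSS bin_antidiagS !PoszM PoszD.
by case: j => [|j] /=; rewrite ?exprS; ring.
Qed.

Lemma bin_antidiag_small n j : (n < j.*2)%N -> 'C(n - j, j) = 0%N.
Proof. by move=> lt_n_2j; rewrite bin_small //; lia. Qed.

Lemma alt_sum_closed n k N : (n <= k)%N -> (n < N)%N ->
  \sum_(0 <= j < N) alt_term n k j = ballot_number (k.*2 - n) k.
Proof.
elim/ltn_ind: n k N => n IH k N le_nk lt_nN.
case: N lt_nN => // N lt_nN; rewrite big_nat_recl //.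
have [le_n1|lt_1n] := leqP n 1.
  rewrite big1 => [|j _]; last first.
    by rewrite /alt_term bin_antidiag_small ?mul0n ?mulr0 //; lia.
  rewrite addr0 /alt_term !subn0 bin0 mul1n mul1r catalanE.
  case: n le_n1 le_nk {IH lt_nN} => [|[|//]] _ le_nk; first by rewrite subn0.
  case: k le_nk => [//|k] _.
  have bin_mid : 'C(k.*2.+1, k.+1) = 'C(k.*2.+1, k).
    by rewrite -bin_sub ?subSS -?addnn ?addnK //; lia.
  rewrite doubleS subSS subn0 ballot_numberS {1}/ballot_number bin_mid.
  by rewrite subrr add0r.
case: n lt_1n IH le_nk lt_nN => [|[|n]] // _ IH le_nk lt_nN.
case: k le_nk => // k le_nk.
have ballot_rec : ballot_number (k.+1.*2 - n.+2) k.+1 =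
    ballot_number (k.+1.*2 - n.+1) k.+1 - ballot_number (k.*2 - n) k.
  have -> : (k.+1.*2 - n.+1 = (k.*2 - n).+1)%N by lia.
  by rewrite doubleS subSS ballot_numberS addrC addKr.
rewrite ballot_rec -(IH n.+1 _ k.+1 N.+1); try lia.
rewrite -(IH n _ k N); try lia.
rewrite (eq_bigr _ (fun j _ => alt_termSS n k j)) big_nat_recl //.
by rewrite sumrB addrA /alt_term !subn0 !bin0.
Qed.

Definition bin_psum a x := (\sum_(i < x) 'C(a, i))%N.

Lemma bin_psumSS a x : bin_psum a.+1 x.+1 = (bin_psum a x.+1 + bin_psum a x)%N.
Proof.
elim: x => [|x IHx]; first by rewrite /bin_psum !big_ord1 big_ord0 !bin0.
rewrite /bin_psum big_ord_recr /= -/(bin_psum a.+1 x.+1) IHx.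
rewrite /bin_psum (big_ord_recr x.+1) (big_ord_recr x) /= binS; lia.
Qed.

Definition grass_count m k : int :=
  (bin_psum m k)%:Z - (bin_psum m (m - k).+1)%:Z
  - ((k.*2 - m)%:Z - 1) * 'C(m, k)%:Z.

Lemma grass_countS m k : (k < m)%N -> (m <= k.*2)%N ->
  grass_count m k.+1 =
  grass_count m.+1 k.+1 - grass_count m k + ballot_number m k.
Proof.
move=> lt_km le_m_2k; rewrite /grass_count /ballot_number.
have [a m_k] : exists a, (m - k = a.+1)%N by exists (m - k).-1; lia.
rewrite subSS m_k (_ : (m - k.+1 = a)%N); last by lia.
rewrite (_ : (k.+1.*2 - m.+1 = (k.*2 - m).+1)%N); last by lia.
rewrite (_ : (k.+1.*2 - m = (k.*2 - m).+2)%N); last by lia.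
rewrite !bin_psumSS binS !PoszD -[(k.*2 - m).+2]addn2 -[(k.*2 - m).+1]addn1 !PoszD.
ring.
Qed.

Lemma alt_wsum_closed n k N : (n <= k)%N -> (n < N)%N ->
  \sum_(0 <= j < N) alt_wterm n k j = grass_count (k.*2 - n) k.
Proof.
elim/ltn_ind: n k N => n IH k N le_nk lt_nN.
case: N lt_nN => // N lt_nN; rewrite big_nat_recl //.
have [le_n1|lt_1n] := leqP n 1.
  rewrite big1 => [|j _]; last first.
    by rewrite /alt_wterm bin_antidiag_small ?muln0 ?mul0n ?mulr0 //; lia.
  rewrite addr0 /alt_wterm mul0n mulr0 /grass_count.
  case: n le_n1 le_nk {IH lt_nN} => [|[|//]] _ le_nk.
    rewrite subn0 subnn -addnn addnK /bin_psum big_ord_recr /= PoszD; ring.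
  case: k le_nk => [//|k] _; rewrite doubleS subSS subn0.
  by rewrite (_ : (k.*2.+1 - k.+1).+1 = k.+1)%N ?subrr ?mul0r ?subr0 //; lia.
case: n lt_1n IH le_nk lt_nN => [|[|n]] // _ IH le_nk lt_nN.
case: k le_nk => // k le_nk.
rewrite doubleS subSS grass_countS; [|lia..].
rewrite (_ : ((k.*2 - n).+1 = k.+1.*2 - n.+1)%N); last by lia.
rewrite -(IH n.+1 _ k.+1 N.+1); try lia.
rewrite -(IH n _ k N); try lia.
rewrite -(@alt_sum_closed n k N); try lia.
rewrite (eq_bigr _ (fun j _ => alt_wtermSS n k j)) big_nat_recl //.
by rewrite big_split sumrB /= /alt_wterm !mul0n !mulr0 !add0r.
Qed.

End AlternatingSums.

Lemma cons_inj (T : Type) (x : T) : injective (cons x).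
Proof. by move=> s1 s2 []. Qed.

Fixpoint words m : seq (seq bool) :=
  if m is m'.+1 then [seq true :: w | w <- words m'] ++ [seq false :: w | w <- words m']
  else [:: [::]].

Lemma mem_words m w : (w \in words m) = (size w == m).
Proof.
elim: m w => [|m IHm] [|b w] //=; rewrite mem_cat.
  by apply/negP => /orP[] /mapP[].
rewrite eqSS -IHm; case: b; rewrite (mem_map (@cons_inj _ _)).
  by rewrite orb_idr // => /mapP[].
by rewrite orb_idl // => /mapP[].
Qed.

Lemma uniq_words m : uniq (words m).
Proof.
elim: m => //= m IHm.
rewrite cat_uniq !map_inj_uniq ?IHm //; try exact: cons_inj.
by rewrite andbT; apply/hasPn => _ /mapP[w _ ->]; apply/mapP => -[].
Qed.

Lemma all_iotaS (P : pred nat) n :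
  all P (iota 0 n.+1) = P 0 && all (fun t => P t.+1) (iota 0 n).
Proof. by rewrite /= -add1n iotaDl all_map. Qed.

Definition ballot M (w : seq bool) :=
  all (fun t => count id (take t w) <= M + count negb (take t w))
      (iota 0 (size w).+1).

Lemma ballot_cons_true M w : ballot M (true :: w) = (0 < M) && ballot M.-1 w.
Proof.
rewrite /ballot [size _]/= all_iotaS.
case: M => [|M]; first by rewrite all_iotaS /= take0.
rewrite /= take0 /=; apply: eq_all => t /=; apply/idP/idP; lia.
Qed.

Lemma ballot_cons_false M w : ballot M (false :: w) = ballot M.+1 w.
Proof.
rewrite /ballot [size _]/= all_iotaS /= take0 /=.
by apply: eq_all => t /=; apply/idP/idP; lia.
Qed.

Definition nballot m z M :=
  count (fun w => (count negb w == z) && ballot M w) (words m).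

Lemma nballotS m z M :
  nballot m.+1 z M =
  (if 0 < M then nballot m z M.-1 else 0) + (if z is z'.+1 then nballot m z' M.+1 else 0).
Proof.
rewrite /nballot /= count_cat !count_map; congr (_ + _).
  case: M => [|M] /=; last by apply: eq_count => w /=; rewrite ballot_cons_true.
  by rewrite (eq_count (a2 := pred0)) ?count_pred0 // => w /=; rewrite ballot_cons_true andbF.
case: z => [|z]; first by rewrite (eq_count (a2 := pred0)) ?count_pred0.
by apply: eq_count => w /=; rewrite ballot_cons_false eqSS.
Qed.

Lemma nballotE m z M : m - z <= z + M ->
  ((nballot m z M)%:Z = 'C(m, z)%:Z - 'C(m, (z + M).+1)%:Z)%R.
Proof.
elim: m z M => [|m IHm] z M le_mz.
  by rewrite /nballot /= /ballot /= addn0; case: z le_mz => [|z] _; rewrite ?bin0n.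
rewrite nballotS PoszD.
case: M le_mz => [|M] le_mz; case: z le_mz => [|z] le_mz /=.
- lia.
- rewrite add0r IHm; last by lia.
  by rewrite addn0 !binS !PoszD addn1; ring.
- rewrite addr0 IHm; last by lia.
  rewrite !binS !add0n !bin0 (@bin_small m M.+2); last by lia.
  by rewrite !PoszD; ring.
- rewrite !IHm; [|lia..].
  by rewrite !binS !PoszD addSn !addnS; ring.
Qed.

Lemma nballot_eq0 m z M : z + M < m - z -> nballot m z M = 0.
Proof.
move=> lt_zM_mz; apply/eqP; rewrite -leqn0 leqNgt -has_count.
apply/hasPn => w; rewrite mem_words => /eqP size_w /=.
apply/negP => /andP[/eqP zeros_w /allP/(_ (size w))].
rewrite mem_iota take_size ltnS leqnn => /(_ isT).
have : count id w + count negb w = m by rewrite -size_w; exact: count_predC.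
lia.
Qed.

Definition cut_weight (w : seq bool) t := count id (take t w) + count negb (drop t w).

Definition cut_bounded k (w : seq bool) :=
  all (fun t => cut_weight w t < k) (iota 0 (size w).+1).

Lemma cut_bounded_ballot k w : 0 < k ->
  cut_bounded k w = (count negb w < k) && ballot (k.-1 - count negb w) w.
Proof.
move=> k_gt0; have count_cut t : count negb w = count negb (take t w) + count negb (drop t w).
  by rewrite -{1}(cat_take_drop t w) count_cat.
apply/allP/andP => [bounded|[zeros_lt /allP bal] t t_range].
  split; last by apply/allP => t /bounded; rewrite /cut_weight; have := count_cut t; lia.
  by have := bounded 0; rewrite mem_iota /cut_weight take0 drop0; apply.
have := bal t t_range; have := count_cut t; rewrite /cut_weight; lia.
Qed.

Lemma count_sum_fibers (T : Type) (g : T -> nat) (Q : nat -> pred T) K s :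
  count (fun x => (g x < K) && Q (g x) x) s =
  \sum_(0 <= z < K) count (fun x => (g x == z) && Q z x) s.
Proof.
elim: K => [|K IHK].
  by rewrite big_geq // (eq_count (a2 := pred0)) ?count_pred0.
rewrite big_nat_recr //= -IHK -count_predUI.
rewrite (eq_count (a1 := predI _ _) (a2 := pred0)) ?count_pred0 ?addn0; last first.
  by move=> x /=; case: eqP => [->|_]; rewrite ?ltnn ?andbF.
apply: eq_count => x /=; case: (g x =P K) => [->|/eqP ne_gK]; first by rewrite ltnn ltnSn.
by rewrite orbF ltnS leq_eqVlt (negbTE ne_gK).
Qed.

Lemma count_cut_bounded m k : 0 < k -> k <= m -> m < k.*2 ->
  ((count (cut_bounded k) (words m))%:Z = grass_count m k)%R.
Proof.
move=> k_gt0 le_km lt_m_2k.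
have le_ak : (m - k).+1 <= k by lia.
rewrite (eq_count (fun w => @cut_bounded_ballot k w k_gt0)).
rewrite (count_sum_fibers (count negb) (fun z => ballot (k.-1 - z))).
rewrite (big_cat_nat _ (n := (m - k).+1)) //= big_nat_cond big1 ?add0n; last first.
  by move=> z /andP[/andP[_ lt_z] _]; apply: nballot_eq0; lia.
rewrite (big_morph Posz PoszD (erefl (Posz 0))).
rewrite (eq_big_nat _ _ (F2 := fun z => 'C(m, z)%:Z - 'C(m, k)%:Z)%R); last first.
  move=> z z_range; rewrite nballotE; last by lia.
  by congr (_ - Posz 'C(m, _))%R; lia.
rewrite sumrB sumr_const_nat /grass_count /bin_psum -!(big_mkord xpredT).
rewrite (@big_cat_nat _ _ _ (m - k).+1 0 k) //= PoszD.
rewrite !(big_morph Posz PoszD (erefl (Posz 0))) -mulr_natr natz.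
rewrite (_ : Posz (k - (m - k).+1) = (k.*2 - m)%:Z - 1)%R; last by rewrite subzn; [congr Posz | ]; lia.
ring.
Qed.

Definition trues (w : seq bool) := [seq v <- iota 0 (size w) | nth false w v].
Definition falses (w : seq bool) := [seq v <- iota 0 (size w) | ~~ nth false w v].
Definition grass_line w := trues w ++ falses w.

Section GrassLine.
Variable w : seq bool.

Lemma perm_grass_line : perm_eq (grass_line w) (iota 0 (size w)).
Proof. by rewrite /grass_line /trues /falses perm_filterC. Qed.

Lemma size_grass_line : size (grass_line w) = size w.
Proof. by rewrite (perm_size perm_grass_line) size_iota. Qed.

Lemma grass_line_uniq : uniq (grass_line w).
Proof. by rewrite (perm_uniq perm_grass_line) iota_uniq. Qed.

Lemma mem_grass_line v : (v \in grass_line w) = (v < size w).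
Proof. by rewrite (perm_mem perm_grass_line) mem_iota. Qed.

Lemma mem_trues v : (v \in trues w) = (v < size w) && nth false w v.
Proof. by rewrite mem_filter mem_iota andbC. Qed.

Lemma mem_falses v : (v \in falses w) = (v < size w) && ~~ nth false w v.
Proof. by rewrite mem_filter mem_iota andbC. Qed.

Lemma size_trues_falses : size (trues w) + size (falses w) = size w.
Proof. by rewrite -size_cat size_grass_line. Qed.

Lemma sorted_trues : sorted ltn (trues w).
Proof. exact/sorted_filter/iota_ltn_sorted/ltn_trans. Qed.

Lemma sorted_falses : sorted ltn (falses w).
Proof. exact/sorted_filter/iota_ltn_sorted/ltn_trans. Qed.

Lemma grass_line_ltn i j : i < j < size w ->
  (j < size (trues w)) || (size (trues w) <= i) ->
  nth 0 (grass_line w) i < nth 0 (grass_line w) j.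
Proof.
move=> /andP[lt_ij lt_jw]; have := size_trues_falses => size_w.
rewrite /grass_line !nth_cat => /orP[lt_jt|le_ti].
  rewrite lt_jt (ltn_trans lt_ij lt_jt).
  apply: (sorted_ltn_nth ltn_trans) => //; first exact: sorted_trues.
  by rewrite inE (ltn_trans lt_ij lt_jt).
have -> : (i < size (trues w)) = false by rewrite ltnNge le_ti.
have -> : (j < size (trues w)) = false by rewrite ltnNge (leq_trans le_ti (ltnW lt_ij)).
apply: (sorted_ltn_nth ltn_trans); rewrite ?inE; [exact: sorted_falses | lia..].
Qed.

Lemma nth_grass_line_trues i : i < size (trues w) -> nth false w (nth 0 (grass_line w) i).
Proof.
move=> lt_it; rewrite /grass_line nth_cat lt_it.
by have := mem_nth 0 lt_it; rewrite mem_trues => /andP[].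
Qed.

Lemma nth_grass_line_falses i : size (trues w) <= i < size w ->
  ~~ nth false w (nth 0 (grass_line w) i).
Proof.
move=> /andP[le_ti lt_iw]; rewrite /grass_line nth_cat ltnNge le_ti /=.
have lt_if : i - size (trues w) < size (falses w) by have := size_trues_falses; lia.
by have := mem_nth 0 lt_if; rewrite mem_falses => /andP[].
Qed.

End GrassLine.

Definition cut_pred (w : seq bool) t v :=
  if v < t then nth false w v else ~~ nth false w v.

Definition cut_seq (w : seq bool) t := [seq v <- iota 0 (size w) | cut_pred w t v].

Lemma cut_seqE (w : seq bool) t : t <= size w ->
  cut_seq w t = [seq v <- iota 0 t | nth false w v]
                ++ [seq v <- iota t (size w - t) | ~~ nth false w v].
Proof.
move=> le_tw; rewrite /cut_seq -{1}(subnKC le_tw) iotaD filter_cat.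
congr (_ ++ _); apply: eq_in_filter => v; rewrite mem_iota /cut_pred.
  by case/andP => _ ->.
by case/andP => le_tv _; rewrite ltnNge le_tv.
Qed.

Lemma size_cut_seq (w : seq bool) t : t <= size w -> size (cut_seq w t) = cut_weight w t.
Proof.
move=> le_tw; rewrite cut_seqE // size_cat !size_filter /cut_weight.
rewrite -(map_nth_iota0 false le_tw) -[drop t w](@take_oversize _ (size w - t)) ?size_drop //.
by rewrite -(map_nth_iota false) // !count_map.
Qed.

Lemma contains_idP m k (s : 'S_m) :
  reflect (exists f : 'I_k -> 'I_m,
             forall a b : 'I_k, a < b -> (f a < f b) && (s (f a) < s (f b)))
          (contains s (id_pat k)).
Proof.
apply: (iffP existsP) => [[f /forallP f_incr]|[f f_incr]].
  exists f => a b lt_ab; have /forallP/(_ b) := f_incr a.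
  by rewrite !perm1 lt_ab /= => /andP[-> /eqP ->].
exists [ffun a => f a]; apply/forallP => a; apply/forallP => b; rewrite !ffunE !perm1.
case: (ltngtP a b) => [lt_ab|lt_ba|/val_inj ->]; last by rewrite !ltnn.
  by have /andP[-> ->] := f_incr a b lt_ab.
by have /andP[_ /ltnW] := f_incr b a lt_ba; rewrite /= leqNgt => /negbTE ->.
Qed.

Definition oneline m (s : 'S_m) := [seq val (s i) | i <- enum 'I_m].

Lemma size_oneline m (s : 'S_m) : size (oneline s) = m.
Proof. by rewrite size_map size_enum_ord. Qed.

Lemma nth_oneline m (s : 'S_m) (i : 'I_m) : nth 0 (oneline s) i = val (s i).
Proof. by rewrite (nth_map i) ?size_enum_ord ?nth_ord_enum. Qed.

Lemma oneline_inj m : injective (@oneline m).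
Proof. by move=> s1 s2 eq_s12; apply/permP => i; apply/val_inj; rewrite -!nth_oneline eq_s12. Qed.

Lemma oneline_uniq m (s : 'S_m) : uniq (oneline s).
Proof. by rewrite map_inj_uniq ?enum_uniq // => i j /val_inj/perm_inj. Qed.

Lemma mem_oneline m (s : 'S_m) v : (v \in oneline s) = (v < m).
Proof.
apply/mapP/idP => [[i _ ->]|lt_vm]; first exact: ltn_ord.
by exists (s^-1 (Ordinal lt_vm))%g; rewrite ?mem_enum ?permKV.
Qed.

Lemma index_oneline m (s : 'S_m) (v : 'I_m) : index (val v) (oneline s) = val (s^-1 v)%g.
Proof.
by rewrite -{1}(permKV s v) -(nth_oneline s) index_uniq ?size_oneline ?oneline_uniq.
Qed.

Lemma in_drop_uniq (T : eqType) (s : seq T) x i : uniq s -> x \in s ->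
  (x \in drop i s) = (i <= index x s).
Proof.
move=> uniq_s s_x; have := s_x; rewrite -{1}(cat_take_drop i s) mem_cat in_take //.
move: uniq_s; rewrite -{1}(cat_take_drop i s) cat_uniq => /and3P[_ /hasPn take_drop _].
case: ltnP => [lt_xi _|//]; apply/negbTE/negP => /take_drop.
by rewrite in_take ?lt_xi.
Qed.

Lemma contains_id_cat m k (s : 'S_m) (A M B : seq nat) :
  oneline s = A ++ M ++ B -> sorted ltn (A ++ B) ->
  k <= size A + size B -> contains s (id_pat k).
Proof.
move=> line_s sorted_AB le_k_AB.
have size_AMB : size A + size M + size B = m.
  by have := congr1 size line_s; rewrite size_oneline !size_cat; lia.
pose pos a := if a < size A then a else size A + size M + (a - size A).
have pos_lt (a : 'I_k) : pos a < m by rewrite /pos; have := ltn_ord a; case: (ltnP a (size A)); lia.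
have line_pos (a : 'I_k) : val (s (Ordinal (pos_lt a))) = nth 0 (A ++ B) a.
  rewrite -nth_oneline line_s /pos /=; case: ltnP => [lt_aA|le_Aa]; first by rewrite !nth_cat lt_aA.
  rewrite -addnA nth_cat ltnNge leq_addr /= addKn.
  by rewrite nth_cat ltnNge leq_addr /= addKn [in RHS]nth_cat ltnNge le_Aa.
apply/contains_idP; exists (fun a => Ordinal (pos_lt a)) => a b lt_ab.
have [lt_ak lt_bk] := (ltn_ord a, ltn_ord b).
rewrite !line_pos /= (sorted_ltn_nth ltn_trans) ?inE ?size_cat ?andbT //; try lia.
by rewrite /pos; case: (ltnP a (size A)); case: (ltnP b (size A)); lia.
Qed.

Section GrassPerm.
Variable m : nat.
Implicit Types w : m.-tuple bool.

Lemma grass_line_ord w (i : 'I_m) : nth 0 (grass_line w) i < m.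
Proof.
have : nth 0 (grass_line w) i \in grass_line w by rewrite mem_nth ?size_grass_line ?size_tuple.
by rewrite mem_grass_line size_tuple.
Qed.

Definition grass_fun w (i : 'I_m) : 'I_m := Ordinal (grass_line_ord w i).

Lemma grass_fun_inj w : injective (grass_fun w).
Proof.
move=> i j /(congr1 val) /= /eqP.
rewrite nth_uniq ?grass_line_uniq ?size_grass_line ?size_tuple //.
by move/eqP/val_inj.
Qed.

Definition grass_perm w : 'S_m := perm (@grass_fun_inj w).

Lemma grass_permE w i : val (grass_perm w i) = nth 0 (grass_line w) i.
Proof. by rewrite permE. Qed.

Lemma grassmannian_grass_perm w : grassmannian (grass_perm w).
Proof.
have descent_at (x j : 'I_m) : val j = (val x).+1 ->
    grass_perm w j < grass_perm w x -> (val x).+1 = size (trues w).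
  move=> j_succ; rewrite !grass_permE => lt_jx.
  have [blocks|] := boolP ((val j < size (trues w)) || (size (trues w) <= val x)).
    have lt_xj : x < j < size w by rewrite j_succ ltnSn size_tuple -j_succ ltn_ord.
    by have := ltn_trans (grass_line_ltn lt_xj blocks) lt_jx; rewrite ltnn.
  rewrite negb_or -leqNgt -ltnNge => /andP[le_tj lt_xt].
  by apply/eqP; rewrite eqn_leq lt_xt -j_succ le_tj.
apply/card_le1_eqP => x y; rewrite !inE.
move=> /existsP[j /andP[/eqP j_succ lt_j]] /existsP[j' /andP[/eqP j'_succ lt_j']].
by apply/val_inj/eqP; rewrite -eqSS (descent_at _ _ j_succ lt_j) (descent_at _ _ j'_succ lt_j').
Qed.

Lemma contains_grass_perm_cut k w :
  contains (grass_perm w) (id_pat k) -> ~~ cut_bounded k w.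
Proof.
move=> /contains_idP[f f_incr]; set d := size (trues w).
pose v a := nth 0 (grass_line w) (f a).
have v_incr (a b : 'I_k) : a < b -> (f a < f b) && (v a < v b).
  by rewrite /v -!grass_permE; exact: f_incr.
have v_lt a : v a < m by exact: grass_line_ord.
have f_mono (a b : 'I_k) : a <= b -> f a <= f b.
  rewrite leq_eqVlt => /orP[/eqP/val_inj -> //|lt_ab].
  by have /andP[/ltnW] := v_incr a b lt_ab.
pose t := \max_(a | f a < d) (v a).+1.
have below_t a : f a < d -> v a < t.
  exact: (@leq_bigmax_cond _ (fun a => f a < d) (fun a => (v a).+1)).
have above_t a : d <= f a -> t <= v a.
  move=> le_dfa; apply/bigmax_leqP => b lt_fbd.
  have lt_ba : b < a by rewrite ltnNge; apply/negP => /f_mono; lia.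
  by have /andP[_ ->] := v_incr b a lt_ba.
have le_tm : t <= m by apply/bigmax_leqP => b _; exact: v_lt.
apply/allPn; exists t; first by rewrite mem_iota size_tuple ltnS le_tm.
rewrite -leqNgt -size_cut_seq ?size_tuple // -[k]card_ord cardE -(size_map v).
apply: uniq_leq_size.
  rewrite map_inj_uniq ?enum_uniq // => a b eq_vab.
  case: (ltngtP a b) => [lt_ab|lt_ba|/val_inj //].
    by have /andP[_] := v_incr a b lt_ab; rewrite eq_vab ltnn.
  by have /andP[_] := v_incr b a lt_ba; rewrite eq_vab ltnn.
move=> _ /mapP[a _ ->]; rewrite mem_filter mem_iota leq0n add0n size_tuple v_lt !andbT /cut_pred.
have [lt_fad|le_dfa] := ltnP (f a) d; first by rewrite below_t //; exact: nth_grass_line_trues.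
by rewrite ltnNge above_t // (nth_grass_line_falses (i := f a)) // le_dfa size_tuple /=.
Qed.

Lemma oneline_grass_perm w : oneline (grass_perm w) = grass_line w.
Proof.
apply: (@eq_from_nth _ 0); first by rewrite size_oneline size_grass_line size_tuple.
by move=> i; rewrite size_oneline => lt_im; rewrite (nth_oneline _ (Ordinal lt_im)) grass_permE.
Qed.

Lemma cut_contains_grass_perm k w t :
  t <= m -> k <= cut_weight w t -> contains (grass_perm w) (id_pat k).
Proof.
move=> le_tm le_k_cut; set W := nth false w.
have cutE : cut_seq w t =
    [seq v <- iota 0 t | W v] ++ [seq v <- iota t (m - t) | ~~ W v].
  by rewrite cut_seqE size_tuple.
apply: (@contains_id_cat _ _ _ _
  ([seq v <- iota t (m - t) | W v] ++ [seq v <- iota 0 t | ~~ W v])).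
- have split_iota : iota 0 m = iota 0 t ++ iota t (m - t) by rewrite -iotaD subnKC.
  by rewrite oneline_grass_perm /grass_line /trues /falses size_tuple split_iota !filter_cat -!catA.
- by rewrite -cutE; exact/sorted_filter/iota_ltn_sorted/ltn_trans.
- by rewrite -size_cat -cutE size_cut_seq ?size_tuple.
Qed.

Lemma contains_grass_perm k w : contains (grass_perm w) (id_pat k) = ~~ cut_bounded k w.
Proof.
apply/idP/idP; first exact: contains_grass_perm_cut.
case/allPn => t; rewrite mem_iota size_tuple ltnS -leqNgt => le_tm le_k_cut.
exact: cut_contains_grass_perm le_tm le_k_cut.
Qed.

Lemma grassmannian_ascents (s : 'S_m) : grassmannian s ->
  exists2 d, d <= m & forall i, i.+1 < m -> i.+1 != d ->
    nth 0 (oneline s) i < nth 0 (oneline s) i.+1.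
Proof.
move=> grass_s.
exists (if [pick i in descents s] is Some i then (val i).+1 else m).
  by case: pickP => // i _; exact: ltn_ord.
move=> i lt_i1m ne_i1d.
pose x := Ordinal (ltnW lt_i1m); pose y := Ordinal lt_i1m.
rewrite (nth_oneline _ x) (nth_oneline _ y).
have x_asc : x \notin descents s.
  apply/negP => x_desc; move: ne_i1d; case: pickP => [i0 i0_desc|no_desc].
    by rewrite (card_le1_eqP grass_s x i0 x_desc i0_desc) eqxx.
  by rewrite no_desc in x_desc.
move: x_asc; rewrite inE negb_exists => /forallP /(_ y); rewrite /= eqxx /= -leqNgt.
rewrite leq_eqVlt => /orP[/eqP/val_inj/perm_inj/(congr1 val) /= /eqP|//].
by rewrite eqn_leq ltnn andbF.
Qed.

Lemma grass_perm_surj (s : 'S_m) : grassmannian s -> exists w, grass_perm w = s.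
Proof.
case/grassmannian_ascents => d le_dm ascent; set L := oneline s.
pose w := [tuple val (s^-1 v)%g < d | v < m].
have nth_w (v : 'I_m) : nth false w v = (val (s^-1 v)%g < d) by rewrite nth_mktuple.
have trues_w : trues w = take d L.
  apply: (irr_sorted_eq ltn_trans ltnn (sorted_trues w)).
    apply/(sortedP 0) => i; rewrite size_takel ?size_oneline // => lt_i1d.
    by rewrite !nth_take //; [apply: ascent; lia | lia].
  move=> v; rewrite mem_trues size_tuple.
  case: (ltnP v m) => [lt_vm|le_mv] /=; last first.
    by apply/esym/negP => /mem_take; rewrite mem_oneline ltnNge le_mv.
  by rewrite in_take ?mem_oneline // (nth_w (Ordinal lt_vm)) (index_oneline _ (Ordinal lt_vm)).
have falses_w : falses w = drop d L.
  apply: (irr_sorted_eq ltn_trans ltnn (sorted_falses w)).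
    apply/(sortedP 0) => i; rewrite size_drop size_oneline => lt_i1.
    by rewrite !nth_drop addnS; apply: ascent; lia.
  move=> v; rewrite mem_falses size_tuple.
  case: (ltnP v m) => [lt_vm|le_mv] /=; last first.
    by apply/esym/negP => /mem_drop; rewrite mem_oneline ltnNge le_mv.
  rewrite in_drop_uniq ?oneline_uniq ?mem_oneline //.
  by rewrite (nth_w (Ordinal lt_vm)) (index_oneline _ (Ordinal lt_vm)) -leqNgt.
exists w; apply: oneline_inj.
by rewrite oneline_grass_perm /grass_line trues_w falses_w cat_take_drop.
Qed.

Lemma sorted_grass_line (w1 w2 : seq bool) : grass_line w1 = grass_line w2 ->
  size (trues w1) < size (trues w2) -> sorted ltn (grass_line w1).
Proof.
move=> eq_line lt_d12; apply/(sortedP 0) => i; rewrite size_grass_line => lt_i1.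
have size_w12 : size w1 = size w2 by rewrite -!size_grass_line eq_line.
case: (ltnP i.+1 (size (trues w2))) => [lt_i1d2|le_d2i1].
  by rewrite eq_line; apply: grass_line_ltn; rewrite ?ltnSn -?size_w12 ?lt_i1 ?lt_i1d2.
by apply: grass_line_ltn; rewrite ?ltnSn ?lt_i1 //; apply/orP; right; lia.
Qed.

Lemma grass_perm_inj k w1 w2 : k <= m -> cut_bounded k w1 -> cut_bounded k w2 ->
  grass_perm w1 = grass_perm w2 -> w1 = w2.
Proof.
move=> le_km bnd1 bnd2 /(congr1 (@oneline m)); rewrite !oneline_grass_perm => eq_line.
have not_sorted w : cut_bounded k w -> ~~ sorted ltn (grass_line w).
  move=> bnd; apply/negP => sorted_w.
  have: contains (grass_perm w) (id_pat k).
    apply: (@contains_id_cat _ _ _ (grass_line w) [::] [::]);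
      by rewrite ?cats0 ?oneline_grass_perm ?size_grass_line ?size_tuple ?addn0.
  by rewrite contains_grass_perm bnd.
case: (ltngtP (size (trues w1)) (size (trues w2))) => [lt_d12|lt_d21|eq_d12].
- by have := not_sorted _ bnd1; rewrite (sorted_grass_line eq_line).
- by have := not_sorted _ bnd2; rewrite (sorted_grass_line (esym eq_line)).
have eq_trues : trues w1 = trues w2.
  by rewrite -(take_size_cat (falses w1) eq_d12) -/(grass_line w1) eq_line take_size_cat.
apply: val_inj; apply: (@eq_from_nth _ false); rewrite ?size_tuple // => v lt_vm.
by have := mem_trues w1 v; rewrite eq_trues mem_trues !size_tuple lt_vm.
Qed.

Lemma card_grass_avoid k : k <= m ->
  #|[set s : 'S_m | grassmannian s && avoids s (id_pat k)]| =
  #|[set w : m.-tuple bool | cut_bounded k w]|.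
Proof.
move=> le_km; rewrite -(card_in_imset (f := grass_perm)); last first.
  by move=> w1 w2; rewrite !inE; exact: grass_perm_inj.
apply: eq_card => s; rewrite inE; apply/andP/imsetP => [[grass_s]|[w]].
  case/grass_perm_surj: grass_s => w <-; rewrite /avoids contains_grass_perm negbK => bnd.
  by exists w; rewrite ?inE.
rewrite inE => bnd ->; split; first exact: grassmannian_grass_perm.
by rewrite /avoids contains_grass_perm bnd.
Qed.

End GrassPerm.

Lemma perm_tuples_words m : perm_eq (map val (enum {: m.-tuple bool})) (words m).
Proof.
apply: uniq_perm; first by rewrite map_inj_uniq ?enum_uniq //; exact: val_inj.
  exact: uniq_words.
move=> w; rewrite mem_words; apply/mapP/idP => [[t _ ->]|size_w]; first by rewrite size_tuple.
by exists (Tuple size_w); rewrite ?mem_enum.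
Qed.

Lemma card_tuples_count m (P : pred (seq bool)) :
  #|[set w : m.-tuple bool | P w]| = count P (words m).
Proof.
move/seq.permP: (perm_tuples_words m) => <-.
by rewrite count_map enumT cardsE cardE /enum_mem size_filter.
Qed.

Unset Implicit Arguments.
Local Open Scope ring_scope.

Theorem theorem3p1 (k m : nat) (hk : (2 <= k)%N) (hkm : (k <= m)%N)
    (hm : (m <= k.*2 - 2)%N) :
  (#|[set s : 'S_m | grassmannian s && avoids s (id_pat k)]|%:Z : int) =
  \sum_(1 <= j < (k.*2 - m).+1)
     (-1) ^+ (j.-1) * ((j * 'C(k.*2 - m - j, j) * catalan (k - j))%N)%:Z.
Proof.
have le_m_2k : (m <= k.*2)%N by lia.
rewrite card_grass_avoid // card_tuples_count count_cut_bounded; [|lia..].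
rewrite -[in LHS](subKn le_m_2k) -(@alt_wsum_closed _ _ (k.*2 - m).+1); [|lia..].
by rewrite big_ltn // /alt_wterm mul0n mulr0 add0r.
Qed.
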